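(* Among all phylogenetic trees with $n$ leaves, the ones with maximum total cophenetic index are exactly the rooted caterpillars, and for a rooted caterpillar $K_n$ with $n$ leaves, $\Phi(K_n)=\binom{n}{3}$.
   Context: A phylogenetic tree with $n$ leaves is a rooted tree whose leaves are bijectively labeled by $\{1,\dots,n\}$, every internal node having at least two children; binary means every internal node has exactly two children. A rooted caterpillar is a binary phylogenetic tree all of whose internal nodes have a leaf child. The depth $\delta_T(v)$ is the number of arcs from the root to $v$; for leaves $i,j$, $\varphi_T(i,j)=\delta_T(LCA_T(i,j))$ ($LCA$ = lowest common ancestor), and $\Phi(T)=\sum_{1\le i<j\le n}\varphi_T(i,j)$ is the total cophenetic index. *)

From mathcomp Require Import all_boot.
Set Implicit Arguments. Unset Strict Implicit. Unset Printing Implicit Defensive.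

Inductive tree : Type := Leaf of nat | Node of seq tree.

Definition is_leaf (t : tree) : bool := if t is Leaf _ then true else false.

Fixpoint leaves (t : tree) : seq nat :=
  match t with
  | Leaf a => [:: a]
  | Node ts => flatten (map leaves ts)
  end.

Fixpoint wf_tree (t : tree) : bool :=
  match t with
  | Leaf _ => true
  | Node ts => (2 <= size ts) && all wf_tree ts
  end.

Definition phylo (n : nat) (t : tree) : bool :=
  wf_tree t && perm_eq (leaves t) (iota 1 n).

Fixpoint binary (t : tree) : bool :=
  match t with
  | Leaf _ => true
  | Node ts => (size ts == 2) && all binary ts
  end.

Fixpoint internal_have_leaf_child (t : tree) : bool :=
  match t with
  | Leaf _ => true
  | Node ts => has is_leaf ts && all internal_have_leaf_child ts
  end.

Definition rooted_caterpillar (t : tree) : bool :=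
  binary t && internal_have_leaf_child t.

(* phi t i j = depth (number of arcs from the root) of LCA_t(i,j),
   for leaves i, j of t (labels unique). *)
Fixpoint phi (t : tree) (i j : nat) : nat :=
  match t with
  | Leaf _ => 0
  | Node ts =>
      foldr (fun c acc => if (i \in leaves c) && (j \in leaves c)
                          then (phi c i j).+1 else acc) 0 ts
  end.

Definition Phi (n : nat) (t : tree) : nat :=
  \sum_(1 <= j < n.+1) \sum_(1 <= i < j) phi t i j.

From mathcomp Require Import all_boot zify.
Set Implicit Arguments. Unset Strict Implicit. Unset Printing Implicit Defensive.

(* For a phylogenetic tree T, phi T i j counts the non-root nodes whose
   subtree contains both leaves i and j, so Phi(T) equals nested_pairs T, the sum
   over all non-root nodes v of C(n_v, 2), where n_v is the number of leaves
   below v.  We prove this by first computing the sum of phi over ordered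
   pairs of distinct leaves (pair_sum), which splits along the children of
   the root, and then halving it by symmetry of phi.

   The heart of the file is the bound nested_pairs T <= C(n, 3), with
   equality iff T is a rooted caterpillar, phrased with MathComp's
   conditional inequalities (m <= n ?= iff C) so that equality cases compose.
   It follows by induction: a child c contributes at most
   C(n_c, 3) + C(n_c, 2) = C(n_c + 1, 3), the map a |-> C(a + 1, 3) is
   superadditive, and C(a + 1, 3) + C(b + 1, 3) <= C(a + b, 3) with equality
   iff a = 1 or b = 1.  Explicit caterpillars of every size attain C(n, 3),
   which gives both halves of the theorem. *)

Lemma leqif_self m : m <= m ?= iff true.
Proof. exact/leqif_refl. Qed.

(* Six times C(m+2, 3) as a product, reducing binomial inequalities to polynomial ones. *)
Lemma binom3S m : 'C(m.+2, 3) * 6 = m.+2 * m.+1 * m.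
Proof. by rewrite (bin_ffact _ 3) ffactnS ffactnS ffactn1 mulnA. Qed.

Lemma binom3_superadd a b : 0 < a ->
  'C(a.+1, 3) + 'C(b.+1, 3) <= 'C((a + b).+1, 3) ?= iff (b == 0).
Proof.
case: a => // a _; apply/leqifP; case: b => [|b] /=.
  by rewrite addn0 [X in _ + X]bin_small ?addn0.
rewrite -(ltn_pmul2r (isT : 0 < 6)) mulnDl addSn addnS !binom3S; lia.
Qed.

Lemma binom3_merge_lt a b :
  'C(a.+3, 3) + 'C(b.+3, 3) < 'C(a.+2 + b.+2, 3).
Proof.
rewrite -(ltn_pmul2r (isT : 0 < 6)) mulnDl !addSn !addnS !binom3S.
have -> : (a + b).+4 * (a + b).+3 * (a + b).+2 =
    a.+3 * a.+2 * a.+1 + b.+3 * b.+2 * b.+1 +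
    (3 * (a * b * (a + b)) + 3 * (a * a + b * b) + 18 * (a * b) + 15 * (a + b) + 11).+1.
  by lia.
by rewrite -[X in X < _]addn0 ltn_add2l.
Qed.

Lemma binom3_merge a b : 0 < a -> 0 < b ->
  'C(a.+1, 3) + 'C(b.+1, 3) <= 'C(a + b, 3) ?= iff (a == 1) || (b == 1).
Proof.
have C23 : 'C(2, 3) = 0 by [].
case: a => [|[|a]] // _; case: b => [|[|b]] // _; apply/leqifP.
- by rewrite eqxx /= C23 add0n add1n.
- by rewrite eqxx orbT /= C23 addn0 addn1.
- exact: binom3_merge_lt.
Qed.

Lemma sum_binom3_superadd (l : seq nat) : all (leq 1) l ->
  \sum_(a <- l) 'C(a.+1, 3) <= 'C((sumn l).+1, 3) ?= iff (size l <= 1).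
Proof.
elim: l => [|a l IHl] /=; first by rewrite big_nil.
case/andP=> a_gt0 l_pos; rewrite big_cons.
have := leqif_trans (leqif_add (leqif_self _) (IHl l_pos)) (binom3_superadd _ a_gt0).
suff -> : (size l <= 1) && (sumn l == 0) = (size l < 1) by [].
case: l l_pos {IHl} => [|b l] //= /andP[b_gt0 _].
by rewrite addn_eq0 (gtn_eqF b_gt0) andbF.
Qed.

Definition tree_nested_ind (P : tree -> Prop)
    (P_leaf : forall a, P (Leaf a))
    (P_node : forall ts, (forall c, List.In c ts -> P c) -> P (Node ts)) :
  forall t, P t :=
  fix tree_ind t :=
    match t with
    | Leaf a => P_leaf a
    | Node ts =>
        P_node ts ((fix forest_ind (ts : seq tree) : forall c, List.In c ts -> P c :=
          match ts with
          | [::] => fun c (in_nil : List.In c [::]) => False_ind _ in_nil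
          | c' :: ts' => fun c in_ts =>
              match in_ts with
              | or_introl eq_c => eq_ind c' P (tree_ind c') c eq_c
              | or_intror in_ts' => forest_ind ts' c in_ts'
              end
          end) ts)
    end.

Lemma leaves_cons c ts : leaves (Node (c :: ts)) = leaves c ++ leaves (Node ts).
Proof. by []. Qed.

Lemma size_leaves_Node ts :
  size (leaves (Node ts)) = sumn [seq size (leaves c) | c <- ts].
Proof. by rewrite size_flatten /shape -map_comp. Qed.

Lemma leaves_gt0 t : wf_tree t -> 0 < size (leaves t).
Proof.
elim/tree_nested_ind: t => [a|[|c ts] IH] //= /andP[_ /andP[wf_c _]].
by rewrite size_cat ltn_addr // IH //; left.
Qed.

Lemma leaf_counts_pos ts : all wf_tree ts -> all (leq 1) [seq size (leaves c) | c <- ts].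
Proof. by elim: ts => //= c ts IH /andP[/leaves_gt0-> /IH]. Qed.

Lemma single_leaf t : wf_tree t -> (size (leaves t) == 1) = is_leaf t.
Proof.
case: t => [a|[|c1 [|c2 ts]]] //= /and3P[wf_c1 wf_c2 _].
have := leaves_gt0 wf_c1; have := leaves_gt0 wf_c2.
rewrite !size_cat; lia.
Qed.

Lemma phi_cons c ts i j : phi (Node (c :: ts)) i j =
  if (i \in leaves c) && (j \in leaves c) then (phi c i j).+1 else phi (Node ts) i j.
Proof. by []. Qed.

Lemma phi_sym t i j : phi t i j = phi t j i.
Proof.
elim/tree_nested_ind: t => [a|ts IH] //.
elim: ts IH => [|c ts IHts] // IH.
rewrite !phi_cons andbC IH ?IHts //; last by left.
by move=> c' c'_in; apply: IH; right.
Qed.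

Lemma phi_notin t i j : i \notin leaves t -> phi t i j = 0.
Proof.
case: t => [a|ts] //.
elim: ts => [|c ts IHts] //; rewrite leaves_cons mem_cat negb_or phi_cons.
by case/andP=> /negbTE-> /IHts.
Qed.

Definition pair_sum (t : tree) : nat :=
  \sum_(i <- leaves t) \sum_(j <- leaves t | j != i) phi t i j.

Lemma count_others (s : seq nat) i : uniq s -> i \in s ->
  \sum_(j <- s | j != i) 1 = (size s).-1.
Proof. by move=> s_uniq i_in; rewrite -sum1_size (bigD1_seq i) // add1n. Qed.

(* pair_sum splits along the first child: pairs inside the first child gain one level
   each, and pairs separated at the root contribute nothing. *)
Lemma pair_sum_cons c ts : uniq (leaves (Node (c :: ts))) ->
  pair_sum (Node (c :: ts)) =
  pair_sum c + size (leaves c) * (size (leaves c)).-1 + pair_sum (Node ts).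
Proof.
rewrite /pair_sum leaves_cons cat_uniq => /and3P[uniq_c disj uniq_ts].
set lc := leaves c; set lr := leaves (Node ts).
have notin_r i : i \in lc -> i \notin lr.
  by move=> i_c; apply/negP=> i_r; move/hasP: disj; apply; exists i.
have notin_c i : i \in lr -> i \notin lc.
  by move=> i_r; apply/negP=> /notin_r; rewrite i_r.
have phi_r i j : i \in lr -> phi (Node (c :: ts)) i j = phi (Node ts) i j.
  by move=> i_r; rewrite phi_cons (negbTE (notin_c _ i_r)).
have phi_lr i j : i \in lc -> j \in lr -> phi (Node (c :: ts)) i j = 0.
  by move=> i_c j_r; rewrite phi_sym phi_r // phi_sym phi_notin ?notin_r.
have phi_l i j : i \in lc -> j \in lc -> phi (Node (c :: ts)) i j = (phi c i j).+1.
  by move=> i_c j_c; rewrite phi_cons i_c j_c.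
rewrite big_cat; congr (_ + _).
- rewrite (eq_big_seq (fun i => \sum_(j <- lc | j != i) phi c i j + (size lc).-1)).
    by rewrite big_split /= big_const_seq count_predT iter_addn_0 mulnC.
  move=> i i_c; rewrite big_cat [X in _ + X = _]big1_seq ?addn0; last first.
    by move=> j /andP[_ j_r]; rewrite phi_lr.
  rewrite -(count_others uniq_c i_c) -big_split big_seq_cond [RHS]big_seq_cond.
  by apply: eq_bigr => j /andP[j_c _]; rewrite phi_l // -addn1.
- apply: eq_big_seq => i i_r; rewrite big_cat big1_seq ?add0n; last first.
    by move=> j /andP[_ j_c]; rewrite phi_sym phi_lr.
  by apply: eq_bigr => j _; rewrite phi_r.
Qed.

Fixpoint nested_pairs (t : tree) : nat :=
  match t with
  | Leaf _ => 0
  | Node ts => sumn [seq nested_pairs c + 'C(size (leaves c), 2) | c <- ts]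
  end.

Lemma nested_pairs_cons c ts : nested_pairs (Node (c :: ts)) =
  nested_pairs c + 'C(size (leaves c), 2) + nested_pairs (Node ts).
Proof. by []. Qed.

Lemma binom2E m : 'C(m, 2) * 2 = m * m.-1.
Proof. by rewrite (bin_ffact m 2) ffactnS ffactn1. Qed.

(* Each unordered pair of leaves is counted twice by pair_sum. *)
Lemma pair_sum_nested t : uniq (leaves t) -> pair_sum t = 2 * nested_pairs t.
Proof.
elim/tree_nested_ind: t => [a|ts IH] t_uniq.
  by rewrite /pair_sum /= !big_cons !big_nil eqxx.
elim: ts IH t_uniq => [|c ts IHts] IH t_uniq; first by rewrite /pair_sum big_nil.
have := t_uniq; rewrite leaves_cons cat_uniq => /and3P[uniq_c _ uniq_ts].
have IHc := IH c (or_introl erefl) uniq_c.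
have IHr := IHts (fun c' c'_in => IH c' (or_intror c'_in)) uniq_ts.
by rewrite pair_sum_cons // IHc IHr nested_pairs_cons -binom2E !mulnDr [_ * 2]mulnC.
Qed.

Lemma sum_offdiag_sym (f : nat -> nat -> nat) m n : (forall i j, f i j = f j i) ->
  \sum_(m <= i < n) \sum_(m <= j < n | j != i) f i j =
  2 * \sum_(m <= j < n) \sum_(m <= i < j) f i j.
Proof.
move=> f_sym.
have below j : j \in index_iota m n ->
    \sum_(m <= i < j) f i j = \sum_(m <= i < n | i < j) f i j.
  by rewrite mem_index_iota => /andP[_ /ltnW j_le]; rewrite (big_nat_widen _ _ _ _ _ j_le).
have split_row i : \sum_(m <= j < n | j != i) f i j =
    \sum_(m <= j < n | j < i) f j i + \sum_(m <= j < n | i < j) f i j.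
  rewrite (bigID (fun j => j < i)) /=; congr (_ + _).
    by apply: eq_big => [j | j _]; [case: ltngtP | apply: f_sym].
  by apply: eq_bigl => j; case: ltngtP.
rewrite (eq_big_seq _ below) mul2n -addnn (eq_bigr _ (fun i _ => split_row i)).
rewrite big_split /=; congr (_ + _).
rewrite (eq_bigr _ (fun i _ => big_mkcond _ _)) exchange_big /=.
by apply: eq_bigr => j _; rewrite [RHS]big_mkcond.
Qed.

Lemma Phi_nested_pairs n t : phylo n t -> Phi n t = nested_pairs t.
Proof.
case/andP=> _ leaves_perm.
have t_uniq : uniq (leaves t) by rewrite (perm_uniq leaves_perm) iota_uniq.
have iotaE : iota 1 n = index_iota 1 n.+1 by rewrite /index_iota subSS subn0.
have := pair_sum_nested t_uniq; rewrite /pair_sum (perm_big _ leaves_perm).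
under eq_bigr do rewrite (perm_big _ leaves_perm).
rewrite iotaE sum_offdiag_sym; last exact: phi_sym.
by rewrite /Phi => /eqP; rewrite eqn_pmul2l // => /eqP.
Qed.

Lemma rooted_caterpillar_Node ts : rooted_caterpillar (Node ts) =
  [&& size ts == 2, has is_leaf ts & all rooted_caterpillar ts].
Proof.
rewrite /rooted_caterpillar /=.
rewrite -[all _ ts in RHS]/(all (predI binary internal_have_leaf_child) ts) all_predI.
by case: (all binary ts); rewrite /= ?andbT ?andbF.
Qed.

(* The same characterization for a node with at least two children, in the form produced
   by the chain of bounds in caterpillar_bound. *)
Lemma rooted_caterpillar_cons2 c1 c2 r : wf_tree c1 -> wf_tree c2 ->
  rooted_caterpillar (Node [:: c1, c2 & r]) =
  [&& all rooted_caterpillar [:: c1, c2 & r], size (c2 :: r) <= 1 &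
      (size (leaves c1) == 1) || (size (leaves (Node (c2 :: r))) == 1)].
Proof.
move=> wf_c1 wf_c2; rewrite rooted_caterpillar_Node.
case: r => [|c3 r] /=; last by rewrite !andbF.
by rewrite cats0 (single_leaf wf_c1) (single_leaf wf_c2) orbF andbT andbC.
Qed.

Lemma forest_bound ts :
  (forall c, List.In c ts -> wf_tree c ->
     nested_pairs c <= 'C(size (leaves c), 3) ?= iff rooted_caterpillar c) ->
  all wf_tree ts ->
  nested_pairs (Node ts) <= \sum_(c <- ts) 'C((size (leaves c)).+1, 3)
    ?= iff all rooted_caterpillar ts.
Proof.
elim: ts => [|c ts IHts] IH; first by rewrite big_nil.
case/andP=> wf_c wf_ts.
have IHc := IH c (or_introl erefl) wf_c.
have IHr := IHts (fun c' c'_in => IH c' (or_intror c'_in)) wf_ts.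
rewrite nested_pairs_cons big_cons binS /= -(andbT (rooted_caterpillar c)).
exact: leqif_add (leqif_add IHc (leqif_self _)) IHr.
Qed.

Lemma caterpillar_bound t : wf_tree t ->
  nested_pairs t <= 'C(size (leaves t), 3) ?= iff rooted_caterpillar t.
Proof.
elim/tree_nested_ind: t => [a _|ts IH wf_node]; first exact: leqif_self.
have /andP[ts_ge2 wf_ts] : (2 <= size ts) && all wf_tree ts := wf_node.
have forest := forest_bound IH wf_ts.
case: ts ts_ge2 IH wf_ts wf_node forest => [|c1 [|c2 r]] // _ _ wf_ts _.
have [wf_c1 wf_rest] : wf_tree c1 /\ all wf_tree (c2 :: r) by apply/andP.
have wf_c2 : wf_tree c2 by case/andP: wf_rest.
have rest_gt0 : 0 < size (leaves (Node (c2 :: r))).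
  by rewrite leaves_cons size_cat ltn_addr ?leaves_gt0.
have split := sum_binom3_superadd (leaf_counts_pos wf_rest).
rewrite size_map big_map -size_leaves_Node in split.
have merge := binom3_merge (leaves_gt0 wf_c1) rest_gt0.
rewrite big_cons => forest.
have := leqif_trans forest (leqif_trans (leqif_add (leqif_self _) split) merge).
rewrite (rooted_caterpillar_cons2 r wf_c1 wf_c2) andTb.
by rewrite [leaves (Node [:: c1, c2 & r])]leaves_cons size_cat.
Qed.

Lemma phylo_size n t : phylo n t -> size (leaves t) = n.
Proof. by case/andP=> _ /perm_size->; rewrite size_iota. Qed.

Lemma Phi_bound n t : phylo n t -> Phi n t <= 'C(n, 3) ?= iff rooted_caterpillar t.
Proof.
move=> phylo_t; rewrite (Phi_nested_pairs phylo_t) -(phylo_size phylo_t).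
by apply: caterpillar_bound; case/andP: phylo_t.
Qed.

Fixpoint caterpillar (k : nat) : tree :=
  if k is k'.+1 then Node [:: caterpillar k'; Leaf k'.+2] else Leaf 1.

Lemma caterpillar_leaves k : leaves (caterpillar k) = iota 1 k.+1.
Proof. by elim: k => [|k IH] //; rewrite leaves_cons IH -[in RHS](addn1 k.+1) iotaD. Qed.

Lemma caterpillar_phylo k : phylo k.+1 (caterpillar k).
Proof.
rewrite /phylo caterpillar_leaves perm_refl andbT.
by elim: k => //= k ->.
Qed.

Lemma caterpillar_rooted k : rooted_caterpillar (caterpillar k).
Proof.
elim: k => // k /andP[bin_k leaf_k].
by rewrite /rooted_caterpillar /= bin_k leaf_k orbT.
Qed.

Theorem mainTheorem7 (n : nat) :
  (forall T : tree, phylo n T ->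
     ((forall T' : tree, phylo n T' -> Phi n T' <= Phi n T) <-> rooted_caterpillar T))
  /\
  (forall K : tree, phylo n K -> rooted_caterpillar K -> Phi n K = 'C(n, 3)).
Proof.
have Phi_max K : phylo n K -> rooted_caterpillar K -> Phi n K = 'C(n, 3).
  by move=> phylo_K; apply: eqTleqif (Phi_bound phylo_K).
split=> // T phylo_T; split=> [T_max | rc_T T' phylo_T'].
- have n_gt0 : 0 < n.
    by rewrite -(phylo_size phylo_T) leaves_gt0 //; case/andP: phylo_T.
  have phylo_K : phylo n (caterpillar n.-1) by rewrite -{1}(prednK n_gt0) caterpillar_phylo.
  rewrite -(eq_leqif (Phi_bound phylo_T)) eqn_leq (Phi_bound phylo_T) /=.
  by rewrite -(Phi_max _ phylo_K (caterpillar_rooted _)) T_max.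
- by rewrite (Phi_max T phylo_T rc_T) (Phi_bound phylo_T').
Qed.
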